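(* Let $k \in \mathbb{N}$ and let $\xi, \varepsilon, \varepsilon', d', d$ be positive constants such that $0 < \xi \ll 1/k \ll \varepsilon \ll \varepsilon' \ll d' \ll d \ll 1$. Suppose $G$ is a graph on $n$ vertices, $A_1, B_1, A_2, B_2, \dots, A_k, B_k$ is a partition of $V(G)$ such that $|A_i|, |B_i| \geq n/3k$ for all $1 \leq i \leq k$, and $R$ is an $(\varepsilon,d)$-reduced graph of $G$ on $A_1, B_1, \dots, A_k, B_k$. Let $(a_i)_{i=1}^k$ and $(b_i)_{i=1}^k$ be integers. Suppose that: (i) $R$ contains the Hamilton cycle $A_1 B_1 A_2 B_2 \dots A_k B_k A_1$; (ii) $R$ contains an edge $A_{i_1}A_{j_1}$ for some $i_1 \neq j_1$; (iii) $R$ contains an edge $B_{i_2}B_{j_2}$ for some $i_2 \neq j_2$; (iv) $(A_i, B_i)_G$ is $(\varepsilon,d)$-super-regular for all $1 \leq i \leq k$; (v) $|a_i|, |b_i| < \xi n$ for each $1 \leq i \leq k$; (vi) $\sum_{i=1}^k a_i + \sum_{i=1}^k b_i = 0$; (vii) $|\sum_{i=1}^k a_i| = |\sum_{i=1}^k b_i| \leq \xi n$. Then there exists a partition $A'_1, B'_1, \dots, A'_k, B'_k$ of $V(G)$ such that $|A'_i| = |A_i| + a_i$ and $|B'_i| = |B_i| + b_i$ for each $1 \leq i \leq k$, $R$ is an $(\varepsilon', d')$-reduced graph of $G$ on $A'_1, B'_1, \dots, A'_k, B'_k$, and $(A'_i, B'_i)_G$ is $(\varepsilon', d')$-super-regular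 for each $1 \leq i \leq k$.
   Context: The hierarchy $0 < \xi \ll 1/k \ll \varepsilon \ll \varepsilon' \ll d' \ll d \ll 1$ means the constants are chosen from right to left, each sufficiently small relative to the previously chosen ones. For disjoint $A, B \subseteq V(G)$, $(A,B)_G$ is the bipartite subgraph of $G$ with classes $A, B$ and all edges of $G$ between them; its density is $d(A,B) = e(A,B)/(|A||B|)$. $(A,B)_G$ is $(\varepsilon,d)$-regular if $d(A,B) \geq d$ and $|d(A,B) - d(X,Y)| < \varepsilon$ for all $X \subseteq A$, $Y \subseteq B$ with $|X| \geq \varepsilon|A|$, $|Y| \geq \varepsilon|B|$; it is $(\varepsilon,d)$-super-regular if moreover every vertex of $A$ has at least $d|B|$ neighbours in $B$ and every vertex of $B$ has at least $d|A|$ neighbours in $A$. Given a partition $V_1, \dots, V_m$ of $V(G)$, a graph $R$ is an $(\varepsilon,d)$-reduced graph of $G$ on $V_1,\dots,V_m$ if $V(R) = \{V_1,\dots,V_m\}$ and $(V_i,V_j)_G$ is $(\varepsilon,d)$-regular whenever $V_iV_j \in E(R)$. If $V'_1,\dots,V'_m$ is another partition of $V(G)$, we say $R$ is an $(\varepsilon',d')$-reduced graph of $G$ on $V'_1,\dots,V'_m$ if $(V'_i,V'_j)_G$ is $(\varepsilon',d')$-regular whenever $V_iV_j \in E(R)$ (with $A'_i$ corresponding to $A_i$ and $B'_i$ to $B_i$). *)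

From mathcomp Require Import all_boot all_order all_algebra.
From mathcomp Require Import reals.
Set Implicit Arguments. Unset Strict Implicit. Unset Printing Implicit Defensive.
Import Order.TTheory GRing.Theory Num.Theory.
Local Open Scope ring_scope.

Section Regularity.
Variables (R : realType) (T : finType) (G : rel T).

Definition edges_between (X Y : {set T}) : nat :=
  #|[set xy in setX X Y | G xy.1 xy.2]|.

Definition density (X Y : {set T}) : R :=
  (edges_between X Y)%:R / (#|X| * #|Y|)%:R.

Definition regular_pair (eps d : R) (A B : {set T}) : Prop :=
  d <= density A B /\
  forall X Y : {set T}, X \subset A -> Y \subset B ->
    eps * #|A|%:R <= #|X|%:R -> eps * #|B|%:R <= #|Y|%:R ->
    `|density A B - density X Y| < eps.

Definition super_regular_pair (eps d : R) (A B : {set T}) : Prop :=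
  regular_pair eps d A B /\
  (forall a, a \in A -> d * #|B|%:R <= #|[set b in B | G a b]|%:R) /\
  (forall b, b \in B -> d * #|A|%:R <= #|[set a in A | G b a]|%:R).

Definition is_partition (I : finType) (P : I -> {set T}) : Prop :=
  (forall i j, i != j -> [disjoint P i & P j]) /\
  (forall x : T, exists i, x \in P i) /\
  (forall i, P i != set0).

Definition reduced_graph (I : finType) (Rg : rel I) (eps d : R)
  (P : I -> {set T}) : Prop :=
  forall i j, Rg i j -> regular_pair eps d (P i) (P j).
End Regularity.

(* Clusters indexed by 'I_k * bool: (i, false) is A_i and (i, true) is B_i. *)
Definition Acl {k : nat} (i : 'I_k) : 'I_k * bool := (i, false).
Definition Bcl {k : nat} (i : 'I_k) : 'I_k * bool := (i, true).

Definition succ_idx {k : nat} (i : 'I_k) : 'I_k :=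
  match k return 'I_k -> 'I_k with
  | 0 => fun i => i
  | k'.+1 => fun i => ordS i
  end i.

Definition contains_ham_cycle {k : nat} (Rg : rel ('I_k * bool)) : Prop :=
  forall i : 'I_k, Rg (Acl i) (Bcl i) /\ Rg (Bcl i) (Acl (succ_idx i)).

From mathcomp Require Import all_boot all_order all_algebra.
From mathcomp Require Import reals.
From mathcomp Require Import ring lra zify.
Set Implicit Arguments. Unset Strict Implicit. Unset Printing Implicit Defensive.
Import Order.TTheory GRing.Theory Num.Theory.
Local Open Scope ring_scope.

(* Let every vertex carry the cluster it currently lies in, and call x admissible for
   a cluster q if x has at least d/2 |P (partner q)| neighbours in the original partner
   cluster of q.  Initially every vertex is admissible for its own cluster, by
   super-regularity.  If Rg p (partner q), then (P p, P (partner q)) is regular, so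
   fewer than eps |P p| vertices of P p fail to be admissible for q: an unmoved
   admissible vertex of P p can be transferred to q.  The Hamilton cycle together with
   the edges A_i1 A_j1 and B_i2 B_j2 connects any two clusters by a chain of at most 2k
   transfers, and a chain from an oversized to an undersized cluster lowers the total
   size deviation by 2.  So at most 2k (sum |a_i| + |b_i|) <= 4 k^2 xi n vertices move,
   a fraction mu = eps'^2/20 of every cluster: densities change by O(mu / eps') on all
   eps'-large subpairs, so regularity survives with the weaker constants, and
   admissibility yields the minimum degrees of super-regularity. *)

Lemma leq_card_setD (T : finType) (A B : {set T}) : (#|A| <= #|B| + #|A :\: B|)%N.
Proof. by rewrite -(cardsID B A) leq_add2r subset_leq_card ?subsetIr. Qed.

Section Fibers.
Variables (T I : finType).

Definition fiber (f : T -> I) (i : I) : {set T} := [set x | f x == i].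

Lemma sum_card_fiber (f : T -> I) : (\sum_i #|fiber f i|)%N = #|T|.
Proof.
transitivity (\sum_i \sum_x (f x == i) : nat)%N.
  apply: eq_bigr => i _; rewrite -sum1_card big_mkcond /=.
  by apply: eq_bigr => x _; rewrite inE; case: (f x == i).
rewrite exchange_big /= -sum1_card; apply: eq_bigr => x _.
by rewrite (bigD1 (f x)) //= eqxx big1 // => i; rewrite eq_sym => /negPf ->.
Qed.

Lemma fiber_partition (f : T -> I) :
  (forall i, fiber f i != set0) -> is_partition (fiber f).
Proof.
move=> fiber_n0; split; [|split] => //.
- move=> i j ij; rewrite -setI_eq0; apply/eqP/setP => x; rewrite !inE.
  by apply/negP => /andP[/eqP -> /eqP e]; rewrite e eqxx in ij.
- by move=> x; exists (f x); rewrite inE.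
Qed.

Definition block_of (P : I -> {set T}) (i0 : I) (x : T) : I :=
  odflt i0 [pick i | x \in P i].

Lemma partition_fiber (P : I -> {set T}) (i0 : I) :
  is_partition P -> forall i, P i = fiber (block_of P i0) i.
Proof.
case=> [P_disj [P_cover _]] i; apply/setP => x; rewrite inE /block_of.
case: pickP => [j xj|none] /=.
- apply/idP/eqP => [xi|<-//]; apply/eqP; apply: contraT => ji.
  by rewrite (disjointFr (P_disj _ _ ji) xj) in xi.
- by have [j xj] := P_cover x; have := none j; rewrite xj.
Qed.
End Fibers.

Lemma dist_ratio_extend (R : realFieldType) (e1 e2 n1 n2 : R) :
  0 <= e1 -> e1 <= n1 -> 0 < n2 -> e1 <= e2 -> e2 + n1 <= e1 + n2 ->
  `|e2 / n2 - e1 / n1| <= (n2 - n1) / n2.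
Proof.
move=> e1_ge0 e1_le n2_gt0 e12 e21.
have [n1_0|n1_n0] := eqVneq n1 0.
  rewrite n1_0 in e1_le e21 *.
  have e1_0 : e1 = 0 by apply/eqP; rewrite eq_le e1_ge0 e1_le.
  rewrite e1_0 in e21 *.
  rewrite invr0 mulr0 !subr0 ger0_norm; last by apply: divr_ge0; lra.
  by rewrite ler_pM2r ?invr_gt0 //; lra.
have n1_gt0 : 0 < n1 by rewrite lt_def n1_n0; apply: le_trans e1_le.
have n2_n0 : n2 != 0 by rewrite lt0r_neq0.
rewrite ler_norml; apply/andP; split; rewrite -subr_ge0.
- have -> : e2 / n2 - e1 / n1 - - ((n2 - n1) / n2) =
            ((n2 - n1) * n1 + e2 * n1 - e1 * n2) / (n1 * n2).
    by field; rewrite n1_n0 n2_n0.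
  apply: divr_ge0; [nra | apply: mulr_ge0; lra].
- have -> : (n2 - n1) / n2 - (e2 / n2 - e1 / n1) =
            ((n2 - n1) * n1 - e2 * n1 + e1 * n2) / (n1 * n2).
    by field; rewrite n1_n0 n2_n0.
  apply: divr_ge0; [nra | apply: mulr_ge0; lra].
Qed.

Section Density.
Variables (R : realType) (T : finType) (G : rel T).
Implicit Types X Y : {set T}.

Lemma edges_between_leq X Y : (edges_between G X Y <= #|X| * #|Y|)%N.
Proof.
rewrite /edges_between -cardsX; apply: subset_leq_card.
by apply/subsetP=> xy; rewrite inE => /andP[].
Qed.

Section Nested.
Variables (X1 X2 Y1 Y2 : {set T}).
Hypotheses (sX : X1 \subset X2) (sY : Y1 \subset Y2).

Let setX_sub : setX X1 Y1 \subset setX X2 Y2.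
Proof.
by apply/subsetP=> xy; rewrite !inE => /andP[/(subsetP sX) -> /(subsetP sY) ->].
Qed.

Let edges_sub :
  [set xy in setX X1 Y1 | G xy.1 xy.2] \subset [set xy in setX X2 Y2 | G xy.1 xy.2].
Proof.
apply/subsetP=> xy; rewrite !inE => /andP[/andP[x1 y1] ->].
by rewrite (subsetP sX _ x1) (subsetP sY _ y1).
Qed.

Lemma edges_betweenS : (edges_between G X1 Y1 <= edges_between G X2 Y2)%N.
Proof. exact: subset_leq_card edges_sub. Qed.

Lemma edges_between_gap :
  (edges_between G X2 Y2 + #|X1| * #|Y1| <= edges_between G X1 Y1 + #|X2| * #|Y2|)%N.
Proof.
rewrite /edges_between -!cardsX.
set E1 := [set xy in setX X1 Y1 | _]; set E2 := [set xy in setX X2 Y2 | _].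
rewrite -(cardsID E1 E2) -(cardsID (setX X1 Y1) (setX X2 Y2)).
rewrite (setIidPr edges_sub) (setIidPr setX_sub).
have : (#|E2 :\: E1| <= #|setX X2 Y2 :\: setX X1 Y1|)%N.
  apply: subset_leq_card; apply/subsetP=> xy; rewrite !inE.
  case/andP=> xy_nE1 /andP[-> Gxy]; rewrite andbT.
  by apply: contra xy_nE1 => ->.
rewrite -/E1; lia.
Qed.

Lemma density_subset_dist (c : R) (M : nat) :
  (#|X2| <= #|X1| + M)%N -> (#|Y2| <= #|Y1| + M)%N ->
  (0 < #|X2|)%N -> (0 < #|Y2|)%N -> M%:R <= c * #|X2|%:R -> M%:R <= c * #|Y2|%:R ->
  `|density R G X2 Y2 - density R G X1 Y1| <= 2 * c.
Proof.
move=> X2_le Y2_le X2_gt0 Y2_gt0 MX MY.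
have X1_le : (#|X1| <= #|X2|)%N by exact: subset_leq_card.
have Y1_le : (#|Y1| <= #|Y2|)%N by exact: subset_leq_card.
apply: le_trans (dist_ratio_extend _ _ _ _ _) _.
- exact: ler0n.
- by rewrite ler_nat edges_between_leq.
- by rewrite ltr0n muln_gt0 X2_gt0.
- by rewrite ler_nat edges_betweenS.
- by rewrite -!natrD ler_nat edges_between_gap.
rewrite !natrM; set x1 := #|X1|%:R; set x2 := #|X2|%:R; set y1 := #|Y1|%:R; set y2 := #|Y2|%:R.
have x2_gt0 : 0 < x2 by rewrite ltr0n.
have y2_gt0 : 0 < y2 by rewrite ltr0n.
have y1_ge0 : 0 <= y1 by rewrite ler0n.
have x1_le : x1 <= x2 by rewrite ler_nat.
have y1_le : y1 <= y2 by rewrite ler_nat.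
have x2_le : x2 <= x1 + M%:R by rewrite -natrD ler_nat.
have y2_le : y2 <= y1 + M%:R by rewrite -natrD ler_nat.
rewrite ler_pdivrMr ?mulr_gt0 //.
(* x2 y2 - x1 y1 = (x2 - x1) y2 + x1 (y2 - y1) <= M y2 + M x2 *)
have := ler_wpM2r (ltW y2_gt0) MX; have := ler_wpM2r (ltW x2_gt0) MY.
have := ler_wpM2r (ltW y2_gt0) x2_le; have := ler_wpM2l (ler0n _ #|X1|) y2_le.
have := ler_wpM2r (ler0n _ M) x1_le.
nra.
Qed.
End Nested.

Definition deg (x : T) (Y : {set T}) : nat := #|[set y in Y | G x y]|.

Lemma deg_setD x Y Y' : (deg x Y <= deg x Y' + #|Y :\: Y'|)%N.
Proof.
apply: leq_trans (leq_card_setD _ [set y in Y' | G x y]) _.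
rewrite leq_add2l subset_leq_card //; apply/subsetP => y; rewrite !inE.
by case/andP=> /negP yY' /andP[-> Gxy]; rewrite andbT; apply/negP => yY; apply: yY'; rewrite yY.
Qed.

Lemma edges_between_sum_deg X Y : edges_between G X Y = (\sum_(x in X) deg x Y)%N.
Proof.
rewrite /edges_between /deg -sum1_card; symmetry.
transitivity (\sum_(x in X) \sum_(y | (y \in Y) && G x y) 1)%N.
  by apply: eq_bigr => x _; rewrite -sum1_card; apply: eq_bigl => y; rewrite !inE.
rewrite (pair_big_dep (fun x => x \in X) (fun x y => (y \in Y) && G x y) (fun _ _ => 1%N)) /=.
by apply: eq_bigl => -[x y] /=; rewrite !inE /= andbA.
Qed.

Lemma regular_pair_low_deg (eps d : R) X Y :
  0 < eps -> eps <= 1 -> eps <= d / 2 -> (0 < #|X|)%N -> regular_pair G eps d X Y ->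
  #|[set x in X | (deg x Y)%:R < d / 2 * #|Y|%:R :> R]|%:R < eps * #|X|%:R.
Proof.
move=> eps_gt0 eps_le1 eps_le X_gt0 [dXY reg].
set S := [set x in X | _].
rewrite ltNge; apply/negP => S_large.
have SX : S \subset X by apply/subsetP => x; rewrite inE => /andP[].
have [x xS] : exists x, x \in S.
  apply/set0Pn; rewrite -card_gt0 -(ltr0n R).
  by apply: lt_le_trans S_large; rewrite mulr_gt0 // ltr0n.
have Y_gt0 : (0 < #|Y|)%N.
  rewrite lt0n; apply/negP => /eqP Y0; move: xS; rewrite inE Y0 mulr0 ltNge ler0n.
  by rewrite andbF.
have Y_large : eps * #|Y|%:R <= #|Y|%:R :> R by rewrite ler_piMl ?ler0n.
have dSY : density R G S Y < d / 2.
  rewrite /density edges_between_sum_deg natr_sum natrM ltr_pdivrMr; last first.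
    by rewrite mulr_gt0 ?ltr0n //; apply/card_gt0P; exists x.
  apply: (@lt_le_trans _ _ (\sum_(x in S) (d / 2 * #|Y|%:R))).
    apply: ltr_sum; first by apply/hasP; exists x => //; rewrite mem_index_enum.
    by move=> z; rewrite inE => /andP[].
  by rewrite sumr_const -mulr_natl; lra.
move: (reg S Y SX (subxx Y) S_large Y_large); rewrite ltr_norml => /andP[_]; lra.
Qed.
End Density.

Section Perturbation.
Variables (R : realType) (T : finType) (G : rel T).
Variables (eps eps' mu : R) (M : nat).
Hypotheses (eps'_gt0 : 0 < eps') (eps'_le1 : eps' <= 1).
Hypothesis eps_le : eps <= eps' / 2.
Hypotheses (mu_ge0 : 0 <= mu) (mu_le : mu <= eps' ^+ 2 / 20).

Definition near_set (A A' : {set T}) : Prop :=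
  [/\ (0 < #|A|)%N, M%:R <= mu * #|A|%:R, (#|A :\: A'| <= M)%N & (#|A' :\: A| <= M)%N].

Let mu_le_eps' : mu <= eps' / 20.
Proof.
apply: le_trans mu_le _; rewrite ler_pM2r ?invr_gt0 ?ltr0n //.
by rewrite expr2 ler_piMr // ltW.
Qed.

Lemma near_set_card (A A' : {set T}) : near_set A A' ->
  (0 < #|A'|)%N /\ M%:R <= 2 * mu * #|A'|%:R.
Proof.
case=> A_gt0 MA AA' _.
have A_le : #|A|%:R <= #|A'|%:R + M%:R :> R.
  by rewrite -natrD ler_nat (leq_trans (leq_card_setD A A')) // leq_add2l.
have A_pos : 0 < #|A|%:R :> R by rewrite ltr0n.
have muA : mu * #|A|%:R <= #|A|%:R / 20.
  by rewrite mulrC ler_pM2l //; have := mu_le_eps'; have := eps'_le1; lra.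
have A_le2 : #|A|%:R <= 2 * #|A'|%:R :> R by lra.
split; first by rewrite -(ltr0n R); lra.
by have := ler_wpM2l mu_ge0 A_le2; rewrite mulrA (mulrC mu 2); lra.
Qed.

Lemma near_set_moved_le (A A' X : {set T}) : near_set A A' ->
  eps' * #|A'|%:R <= #|X|%:R -> M%:R <= 2 * mu / eps' * #|X|%:R.
Proof.
move=> nA X_large; have [_ MA'] := near_set_card nA; apply: le_trans MA' _.
have -> : 2 * mu * #|A'|%:R = 2 * mu / eps' * (eps' * #|A'|%:R).
  by field; exact: lt0r_neq0.
by rewrite ler_wpM2l // divr_ge0 ?mulr_ge0 // ltW.
Qed.

Lemma density_near (A A' B B' : {set T}) : near_set A A' -> near_set B B' ->
  `|density R G A' B' - density R G A B| <= 6 * mu.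
Proof.
move=> nA nB; have [A'_gt0 MA'] := near_set_card nA; have [B'_gt0 MB'] := near_set_card nB.
case: nA => A_gt0 MA AA' A'A; case: nB => B_gt0 MB BB' B'B.
have AA'_le : (#|A| <= #|A :&: A'| + M)%N by rewrite -{1}(cardsID A' A) leq_add2l.
have BB'_le : (#|B| <= #|B :&: B'| + M)%N by rewrite -{1}(cardsID B' B) leq_add2l.
have A'A_le : (#|A'| <= #|A :&: A'| + M)%N by rewrite setIC -{1}(cardsID A A') leq_add2l.
have B'B_le : (#|B'| <= #|B :&: B'| + M)%N by rewrite setIC -{1}(cardsID B B') leq_add2l.
have dAB := density_subset_dist G (subsetIl A A') (subsetIl B B') AA'_le BB'_le A_gt0 B_gt0 MA MB.
have dA'B' := density_subset_dist G (subsetIr A A') (subsetIr B B') A'A_le B'B_le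
  A'_gt0 B'_gt0 MA' MB'.
have := ler_distD (density R G (A :&: A') (B :&: B')) (density R G A' B') (density R G A B).
rewrite (distrC (density R G (A :&: A') _)); lra.
Qed.

Lemma card_setI_superset (A A' X : {set T}) :
  X \subset A' -> (#|A' :\: A| <= M)%N -> (#|X| <= #|X :&: A| + M)%N.
Proof.
move=> XA' A'A; rewrite -(cardsID A X) leq_add2l (leq_trans _ A'A) //.
by rewrite subset_leq_card // setSD.
Qed.

Lemma near_set_large (A A' X : {set T}) : near_set A A' -> X \subset A' ->
  eps' * #|A'|%:R <= #|X|%:R -> eps * #|A|%:R <= #|X :&: A|%:R.
Proof.
case=> A_gt0 MA AA' A'A XA' X_large; have X_le := card_setI_superset XA' A'A.
have A_le : #|A|%:R <= #|A'|%:R + M%:R :> R.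
  by rewrite -natrD ler_nat (leq_trans (leq_card_setD A A')) // leq_add2l.
have A'_ge : #|A|%:R - M%:R <= #|A'|%:R :> R by lra.
have X_le' : #|X|%:R <= #|X :&: A|%:R + M%:R :> R by rewrite -natrD ler_nat.
(* |X :&: A| >= eps' (|A| - M) - M >= (eps' - 2 mu) |A| *)
have := ler_wpM2l (ltW eps'_gt0) A'_ge.
have := ler_wpM2r (ler0n R M) eps'_le1; rewrite mul1r.
have := ler_wpM2r (ler0n R #|A|) mu_le_eps'; have := ler_wpM2r (ler0n R #|A|) eps_le.
have := mulr_ge0 (ltW eps'_gt0) (ler0n R #|A|).
rewrite mulrBr; lra.
Qed.

Lemma regular_pair_perturb (d d' : R) (A A' B B' : {set T}) :
  6 * mu <= d - d' -> near_set A A' -> near_set B B' ->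
  regular_pair G eps d A B -> regular_pair G eps' d' A' B'.
Proof.
move=> mu_gap nA nB [dAB reg]; have dA'B' := density_near nA nB.
split; first by move: dA'B'; rewrite ler_norml => /andP[+ _]; lra.
move=> X Y XA' YB' X_large Y_large.
have [A'_gt0 _] := near_set_card nA; have [B'_gt0 _] := near_set_card nB.
have X_gt0 : 0 < #|X|%:R :> R by apply: lt_le_trans X_large; rewrite mulr_gt0 ?ltr0n.
have Y_gt0 : 0 < #|Y|%:R :> R by apply: lt_le_trans Y_large; rewrite mulr_gt0 ?ltr0n.
have M_X := near_set_moved_le nA X_large; have M_Y := near_set_moved_le nB Y_large.
have dXY : `|density R G X Y - density R G (X :&: A) (Y :&: B)| <= 2 * (2 * mu / eps').
  apply: density_subset_dist M_X M_Y; rewrite ?subsetIl -?(ltr0n R) //.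
  - by case: nA => _ _ _; apply: card_setI_superset.
  - by case: nB => _ _ _; apply: card_setI_superset.
have reg_XY := reg _ _ (subsetIr X A) (subsetIr Y B)
  (near_set_large nA XA' X_large) (near_set_large nB YB' Y_large).
have mu_eps : mu / eps' <= eps' / 20 by rewrite ler_pdivrMr // mulrAC -expr2.
have := ler_distD (density R G A B) (density R G A' B') (density R G (X :&: A) (Y :&: B)).
have := ler_distD (density R G (X :&: A) (Y :&: B)) (density R G A' B') (density R G X Y).
rewrite (distrC (density R G (X :&: A) _) (density R G X Y)).
have := eps_le; have := mu_le_eps'; rewrite !mulrA in dXY; lra.
Qed.
End Perturbation.

Lemma sum_eq0_pos_neg (V : realDomainType) (I : finType) (F : I -> V) :
  \sum_i F i = 0 -> (exists i, F i != 0) -> (exists i, 0 < F i) /\ (exists i, F i < 0).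
Proof.
move=> sumF0 [i Fi_n0].
have sum_ge0_eq0 (H : I -> V) : (forall j, 0 <= H j) -> \sum_j H j = 0 -> H i = 0.
  by move=> H_ge0 sumH0; apply: (psumr_eq0P (fun j _ => H_ge0 j) sumH0).
split.
- case: (pickP (fun j => 0 < F j)) => [j Fj|F_le0]; first by exists j.
  have : - F i = 0.
    apply: (sum_ge0_eq0 (fun j => - F j)); last by rewrite sumrN sumF0 oppr0.
    by move=> j; rewrite oppr_ge0 leNgt F_le0.
  by move/eqP; rewrite oppr_eq0 (negPf Fi_n0).
- case: (pickP (fun j => F j < 0)) => [j Fj|F_ge0]; first by exists j.
  have : F i = 0 by apply: sum_ge0_eq0 sumF0 => j; rewrite leNgt F_ge0.
  by move/eqP; rewrite (negPf Fi_n0).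
Qed.

Lemma sum_dist_shift (I : finType) (s s' t : I -> int) (p q : I) :
  t p < s p -> s q < t q -> (forall r, s' r = s r - (r == p)%:R + (r == q)%:R) ->
  \sum_r `|s' r - t r| = \sum_r `|s r - t r| - 2.
Proof.
move=> surplus_p deficit_q s'E.
have pq : p != q by apply: contraTneq surplus_p => ->; rewrite -leNgt ltW.
have sum_delta (p0 : I) : \sum_r ((r == p0)%:R : int) = 1.
  by rewrite (bigD1 p0) //= eqxx big1 ?addr0 // => r /negPf ->.
have shift_r r : `|s' r - t r| = `|s r - t r| - (r == p)%:R - (r == q)%:R.
  rewrite s'E; case: (eqVneq r p) => [->|rp].
    by rewrite (negPf pq) /= addr0 subr0 !ger0_norm; [ring | lia | lia].
  case: (eqVneq r q) => [->|rq] /=; last by rewrite subr0 addr0 !subr0.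
  by rewrite !ler0_norm; [ring | lia | lia].
rewrite (eq_bigr _ (fun r _ => shift_r r)) !sumrB !sum_delta; ring.
Qed.

Inductive walk (I : Type) (E : rel I) : nat -> I -> I -> Prop :=
| walk0 p : walk E 0 p p
| walkS n p q r : E p q -> walk E n q r -> walk E n.+1 p r.

Lemma walk_cat (I : Type) (E : rel I) n m p q r :
  walk E n p q -> walk E m q r -> walk E (n + m) p r.
Proof.
elim=> {n p q} [//|n p q q' Epq _ IH] w_qr.
by rewrite addSn; apply: walkS Epq (IH w_qr).
Qed.

Section Redistribution.
Variables (T I : finType) (f0 : T -> I) (good : T -> I -> bool).

Definition admissible (f : T -> I) : Prop := forall x, good x (f x).
Definition moved (f : T -> I) : nat := #|[set x | f x != f0 x]|.
Definition unfit (p q : I) : {set T} := [set x in fiber f0 p | ~~ good x q].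

Lemma moved0 : moved f0 = 0%N.
Proof. by apply/eqP; rewrite cards_eq0; apply/eqP/setP => x; rewrite !inE eqxx. Qed.

Lemma card_fiber_setD (f : T -> I) p :
  (#|fiber f0 p :\: fiber f p| <= moved f)%N /\ (#|fiber f p :\: fiber f0 p| <= moved f)%N.
Proof.
split; apply: subset_leq_card; apply/subsetP => x; rewrite !inE.
- by case/andP => fx_n /eqP ->.
- by case/andP => f0x_n /eqP ->; rewrite eq_sym.
Qed.

Lemma move_vertex (f : T -> I) (p q : I) :
  admissible f -> (#|unfit p q| + moved f < #|fiber f0 p|)%N ->
  exists f', [/\ admissible f', (moved f' <= (moved f).+1)%N &
    forall r, #|fiber f' r|%:Z = #|fiber f r|%:Z - (r == p)%:R + (r == q)%:R].
Proof.
move=> adm_f room.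
set Mv := [set x | f x != f0 x].
set Ok := [set x in fiber f0 p | good x q && (f x == f0 x)].
have /set0Pn[x] : Ok != set0.
  apply/negP => /eqP Ok0; move: room; rewrite ltnNge => /negP; apply.
  have sub : fiber f0 p \subset (unfit p q :|: Mv) :|: Ok.
    apply/subsetP => x; rewrite !inE => ->.
    by case: (good x q); case: (f x == f0 x).
  rewrite Ok0 setU0 in sub; apply: leq_trans (subset_leq_card sub) _.
  by rewrite cardsU leq_subr.
rewrite !inE => /andP[/eqP f0x /andP[gx /eqP fx]].
exists (fun y => if y == x then q else f y); split.
- by move=> y; case: (y =P x) => [->|_]; last exact: adm_f.
- apply: (@leq_trans #|x |: Mv|); last by rewrite cardsU1; case: (x \in Mv).
  apply: subset_leq_card; apply/subsetP => y; rewrite !inE.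
  by case: (y =P x) => [->|_] //= ->; rewrite orbT.
- move=> r; rewrite /fiber (cardsD1 x [set y | (if y == x then q else f y) == r]).
  rewrite (cardsD1 x [set y | f y == r]).
  have -> : [set y | (if y == x then q else f y) == r] :\ x = [set y | f y == r] :\ x.
    by apply/setP => y; rewrite !inE; case: eqP.
  rewrite !inE eqxx fx f0x (eq_sym r p) (eq_sym r q) !PoszD.
  by case: (p == r); case: (q == r) => /=; rewrite ?addr0 ?subr0; ring.
Qed.

Variables (E : rel I) (budget : nat).
Hypothesis room : forall p q, E p q -> (#|unfit p q| + budget <= #|fiber f0 p|)%N.

Lemma move_along_walk n p r : walk E n p r -> forall f, admissible f ->
  (moved f + n <= budget)%N ->
  exists f', [/\ admissible f', (moved f' <= moved f + n)%N &
    forall s, #|fiber f' s|%:Z = #|fiber f s|%:Z - (s == p)%:R + (s == r)%:R].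
Proof.
elim=> {n p r} [p|n p q r Epq _ IH] f adm_f budget_f.
  by exists f; split; rewrite ?addn0 // => s; rewrite subrK.
have room_pq : (#|unfit p q| + moved f < #|fiber f0 p|)%N by have := room Epq; lia.
have [f1 [adm_f1 moved_f1 fiber_f1]] := move_vertex adm_f room_pq.
have [f' [adm_f' moved_f' fiber_f']] := IH f1 adm_f1 ltac:(lia).
by exists f'; split; [| lia | move=> s; rewrite fiber_f' fiber_f1; ring].
Qed.

Variables (t : I -> int) (L : nat).
Hypothesis walk_le : forall p q, exists2 n, (n <= L)%N & walk E n p q.
Hypothesis sum_t : \sum_i t i = #|T|%:Z.

Definition deviation (f : T -> I) : int := \sum_i `|#|fiber f i|%:Z - t i|.

Lemma deviation_eq0 (f : T -> I) : deviation f = 0 -> forall i, #|fiber f i|%:Z = t i.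
Proof.
move=> dev0 i; apply/eqP; rewrite -subr_eq0 -normr_eq0; apply/eqP.
exact: (psumr_eq0P (fun j _ => normr_ge0 _) dev0).
Qed.

Lemma sum_fiber_sub_t (f : T -> I) : \sum_i (#|fiber f i|%:Z - t i) = 0.
Proof.
by rewrite sumrB sum_t -(big_morph Posz PoszD erefl) sum_card_fiber subrr.
Qed.

Lemma redistribute m (f : T -> I) : admissible f -> (moved f + m * L <= budget)%N ->
  deviation f <= (2 * m)%:Z ->
  exists f', [/\ admissible f', (moved f' <= budget)%N & forall i, #|fiber f' i|%:Z = t i].
Proof.
elim: m f => [|m IH] f adm_f budget_f dev_f.
  have dev_ge0 : 0 <= deviation f by apply: sumr_ge0.
  by exists f; split=> //; [lia | apply: deviation_eq0; lia].
have [dev0|dev_n0] := eqVneq (deviation f) 0.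
  by exists f; split=> //; [lia | exact: deviation_eq0].
have unbalanced : exists i, #|fiber f i|%:Z - t i != 0.
  apply/existsP; apply: contraNT dev_n0 => /existsPn balanced.
  by apply/eqP/big1 => i _; have /negPn/eqP -> := balanced i.
have [[p surplus_p] [q deficit_q]] := sum_eq0_pos_neg (sum_fiber_sub_t f) unbalanced.
have [n n_le w] := walk_le p q.
have budget_w : (moved f + n <= budget)%N by move: budget_f; rewrite mulSn; nia.
have [f1 [adm_f1 moved_f1 fiber_f1]] := move_along_walk w adm_f budget_w.
have dev_f1 : deviation f1 = deviation f - 2.
  by apply: sum_dist_shift fiber_f1; lia.
apply: IH adm_f1 _ _; first by move: budget_f; rewrite mulSn; nia.
by rewrite dev_f1; move: dev_f; lia.
Qed.
End Redistribution.

Lemma succ_idx_val (k : nat) (i : 'I_k) : (succ_idx i : nat) = (i.+1 %% k)%N.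
Proof. by case: k i => [|k] i; [case: i | by []]. Qed.

Lemma iter_succ_idx_val (k m : nat) (i : 'I_k) :
  (iter m (@succ_idx k) i : nat) = ((i + m) %% k)%N.
Proof.
elim: m => [|m IH] /=; first by rewrite addn0 modn_small.
rewrite succ_idx_val IH -addn1 modnDml; congr (_ %% _)%N; lia.
Qed.

Lemma iter_succ_idx_onto (k : nat) (i j : 'I_k) :
  exists2 m, (m < k)%N & iter m (@succ_idx k) i = j.
Proof.
have k_gt0 : (0 < k)%N by case: k i j => [[]|].
exists ((j + (k - i)) %% k)%N; first by rewrite ltn_mod.
apply: val_inj => /=; rewrite iter_succ_idx_val modnDmr.
have -> : (i + (j + (k - i)) = j + k)%N by have := ltn_ord i; lia.
by rewrite modnDr modn_small.
Qed.

Definition partner (I : Type) (p : I * bool) : I * bool := (p.1, ~~ p.2).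

Definition transfer (I : Type) (Rg : rel (I * bool)) : rel (I * bool) :=
  fun p q => Rg p (partner q).

Section HamiltonWalks.
Variables (k : nat) (Rg : rel ('I_k * bool)).
Hypotheses (Rg_sym : symmetric Rg) (Rg_ham : contains_ham_cycle Rg).

(* Transfers run forwards along B_1 B_2 ... B_k and backwards along A_k ... A_1;
   an A-A edge of Rg leads from the A-side to the B-side and a B-B edge back. *)
Lemma walk_succ_B m (i : 'I_k) :
  walk (transfer Rg) m (Bcl i) (Bcl (iter m (@succ_idx k) i)).
Proof.
elim: m i => [|m IH] i; first exact: walk0.
by rewrite iterSr; apply: walkS (IH _); exact: (Rg_ham i).2.
Qed.

Lemma walk_pred_A m (i : 'I_k) :
  walk (transfer Rg) m (Acl (iter m (@succ_idx k) i)) (Acl i).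
Proof.
elim: m i => [|m IH] i; first exact: walk0.
by rewrite iterS; apply: walkS (IH _); rewrite /transfer /= Rg_sym; exact: (Rg_ham _).2.
Qed.

Lemma walk_A (i j : 'I_k) : exists2 m, (m < k)%N & walk (transfer Rg) m (Acl i) (Acl j).
Proof. by have [m m_lt <-] := iter_succ_idx_onto j i; exists m => //; apply: walk_pred_A. Qed.

Lemma walk_B (i j : 'I_k) : exists2 m, (m < k)%N & walk (transfer Rg) m (Bcl i) (Bcl j).
Proof. by have [m m_lt <-] := iter_succ_idx_onto i j; exists m => //; apply: walk_succ_B. Qed.

Lemma transfer_walks (i1 j1 i2 j2 : 'I_k) : Rg (Acl i1) (Acl j1) -> Rg (Bcl i2) (Bcl j2) ->
  forall p q, exists2 n, (n <= 2 * k)%N & walk (transfer Rg) n p q.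
Proof.
have walk1 p q : transfer Rg p q -> walk (transfer Rg) 1 p q by move=> Epq; apply: walkS Epq (walk0 _ _).
move=> Rg_AA Rg_BB [x [|]] [y [|]].
- by have [m m_lt w] := walk_B x y; exists m => //; lia.
- have [m1 m1_lt w1] := walk_B x j2; have [m2 m2_lt w2] := walk_A i2 y.
  exists (m1 + (1 + m2))%N; first lia.
  by apply: walk_cat w1 (walk_cat (walk1 _ _ _) w2); rewrite /transfer /= Rg_sym.
- have [m1 m1_lt w1] := walk_A x j1; have [m2 m2_lt w2] := walk_B i1 y.
  exists (m1 + (1 + m2))%N; first lia.
  by apply: walk_cat w1 (walk_cat (walk1 _ _ _) w2); rewrite /transfer /= Rg_sym.
- by have [m m_lt w] := walk_A x y; exists m => //; lia.
Qed.
End HamiltonWalks.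

Lemma sum_pair (V : nmodType) (k : nat) (F : 'I_k * bool -> V) :
  \sum_p F p = \sum_i (F (i, false) + F (i, true)).
Proof.
rewrite (eq_bigr (fun i => \sum_(c : bool) F (i, c))); last first.
  by move=> i _; rewrite big_bool /= addrC.
by rewrite pair_bigA; apply: eq_bigr => -[].
Qed.

Section Rebalancing.
Variables (R : realType) (d d' eps' eps xi : R) (k : nat).
Hypotheses (d_gt0 : 0 < d) (d_le1 : d <= 1) (d'_gt0 : 0 < d') (d'_le : d' <= d / 8).
Hypotheses (eps'_gt0 : 0 < eps') (eps'_le : eps' <= d').
Hypotheses (eps_gt0 : 0 < eps) (eps_le : eps <= eps' / 2).
Hypotheses (k_gt0 : (0 < k)%N) (xi_gt0 : 0 < xi) (xi_le : xi <= eps' ^+ 2 / 20 / (12 * k%:R ^+ 3)).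

Local Notation mu := (eps' ^+ 2 / 20).

Let mu_gt0 : 0 < mu. Proof. by rewrite divr_gt0 ?exprn_gt0. Qed.

Let eps'_le1 : eps' <= 1.
Proof. by have := d_le1; have := d'_le; have := eps'_le; lra. Qed.

Let mu_le_eps' : mu <= eps' / 20.
Proof. by rewrite ler_pM2r ?invr_gt0 ?ltr0n // expr2 ler_piMr // ltW. Qed.

Let mu_gap : 6 * mu <= d - d'.
Proof. by have := mu_le_eps'; have := eps'_le; have := d'_le; have := d'_gt0; lra. Qed.

Let mu_le_d : mu <= d / 40.
Proof. by have := mu_le_eps'; have := eps'_le; have := d'_le; have := d_gt0; lra. Qed.

Let eps_le_half : eps <= 1 / 2.
Proof. by have := eps_le; have := eps'_le1; lra. Qed.

Let mu_le_half : mu <= 1 / 2.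
Proof. by have := mu_le_eps'; have := eps'_le1; lra. Qed.

Let xi_k3 : xi * (12 * k%:R ^+ 3) <= mu.
Proof. by rewrite -ler_pdivlMr // mulr_gt0 // exprn_gt0 // ltr0n. Qed.

Let eps_le_d : eps <= d / 2.
Proof. by have := eps_le; have := eps'_le; have := d'_le; have := d_gt0; lra. Qed.

Variables (T : finType) (G : rel T) (P : 'I_k * bool -> {set T}) (Rg : rel ('I_k * bool)).
Variables (a b : 'I_k -> int) (i1 j1 i2 j2 : 'I_k).
Hypotheses (Rg_sym : symmetric Rg) (P_part : is_partition P).
Hypothesis P_large : forall p, #|T|%:R / (3 * k)%:R <= #|P p|%:R :> R.
Hypothesis P_reduced : reduced_graph G Rg eps d P.
Hypothesis Rg_ham : contains_ham_cycle Rg.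
Hypotheses (Rg_AA : Rg (Acl i1) (Acl j1)) (Rg_BB : Rg (Bcl i2) (Bcl j2)).
Hypothesis P_super : forall i, super_regular_pair G eps d (P (Acl i)) (P (Bcl i)).
Hypothesis ab_small :
  forall i, (`|a i|)%:~R < xi * #|T|%:R /\ (`|b i|)%:~R < xi * #|T|%:R :> R.
Hypothesis ab_sum : \sum_(i < k) a i + \sum_(i < k) b i = 0.

Definition excess (p : 'I_k * bool) : int := if p.2 then b p.1 else a p.1.
Definition target (p : 'I_k * bool) : int := #|P p|%:Z + excess p.
Definition cluster : T -> 'I_k * bool := block_of P (Ordinal k_gt0, false).
Definition many_nbrs (x : T) (q : 'I_k * bool) : bool :=
  d / 2 * #|P (partner q)|%:R <= (deg G x (P (partner q)))%:R.
Definition total_excess : nat := (\sum_p `|excess p|)%N.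
Definition budget : nat := (total_excess * (2 * k))%N.

Let P_fiber p : P p = fiber cluster p. Proof. exact: partition_fiber. Qed.

Let P_gt0 p : (0 < #|P p|)%N.
Proof. by case: P_part => _ [_ P_n0]; rewrite card_gt0. Qed.

Lemma excess_small p : `|(excess p)%:~R| < xi * #|T|%:R :> R.
Proof. by rewrite -intr_norm; case: p => i [] /=; case: (ab_small i). Qed.

Lemma budget_le p : budget%:R <= mu * #|P p|%:R.
Proof.
set n := #|T|%:R : R.
have k_n0 : k%:R != 0 :> R by rewrite pnatr_eq0 -lt0n.
have excess_le : total_excess%:R <= 2 * k%:R * (xi * n).
  rewrite natr_sum; under eq_bigr do rewrite natr_absz intr_norm.
  apply: le_trans (ler_sum _ (fun p _ => ltW (excess_small p))) _.
  rewrite sumr_const card_prod card_ord card_bool -(mulr_natr (xi * n) (k * 2)) natrM.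
  by rewrite le_eqVlt; apply/orP; left; apply/eqP; ring.
rewrite /budget natrM.
apply: le_trans (ler_wpM2r (ler0n _ _) excess_le) _.
apply: le_trans (ler_wpM2l (ltW mu_gt0) (P_large p)).
have -> : 2 * k%:R * (xi * n) * (2 * k)%:R = xi * (12 * k%:R ^+ 3) * (n / (3 * k)%:R).
  by rewrite !natrM; field; rewrite k_n0.
by rewrite ler_wpM2r ?xi_k3 // divr_ge0 ?ler0n.
Qed.

Lemma target_gt0 p : 0 < target p.
Proof.
rewrite -(ltr0z R) /target intrD.
have := ltrNnormlW (excess_small p).
suff : xi * #|T|%:R <= #|T|%:R / (3 * k)%:R by have := P_large p; lra.
have k_ge1 : 1 <= k%:R :> R by rewrite ler1n.
have k_le : 3 * k%:R <= 12 * k%:R ^+ 3 :> R.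
  have : k%:R <= k%:R ^+ 3 :> R by rewrite exprS ler_peMr ?exprn_ege1 ?ler0n.
  lra.
have xi_k : xi * (3 * k%:R) <= 1.
  by have := ler_wpM2l (ltW xi_gt0) k_le; have := xi_k3; have := mu_le_half; lra.
rewrite ler_pdivlMr ?ltr0n ?muln_gt0 // natrM.
by have := ler_wpM2l (ler0n R #|T|) xi_k; lra.
Qed.

Lemma sum_target : \sum_p target p = #|T|%:Z.
Proof.
rewrite big_split /= (sum_pair excess) /= big_split /= ab_sum addr0.
rewrite -(big_morph Posz PoszD erefl) -(sum_card_fiber cluster).
by congr Posz; apply: eq_bigr => p _; rewrite P_fiber.
Qed.

Lemma deviation_cluster : deviation target cluster = total_excess%:Z.
Proof.
rewrite /deviation /total_excess (big_morph Posz PoszD erefl).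
apply: eq_bigr => p _; rewrite -P_fiber /target abszE.
by rewrite opprD addrA subrr sub0r normrN.
Qed.

Lemma transfer_room p q : transfer Rg p q ->
  (#|unfit cluster many_nbrs p q| + budget <= #|fiber cluster p|)%N.
Proof.
move=> Rpq; rewrite -P_fiber.
have -> : unfit cluster many_nbrs p q =
    [set x in P p | (deg G x (P (partner q)))%:R < d / 2 * #|P (partner q)|%:R].
  by rewrite /unfit -P_fiber; apply/setP => x; rewrite !inE /many_nbrs -ltNge.
have eps_le1 : eps <= 1 by have := eps_le_half; lra.
have few := regular_pair_low_deg eps_gt0 eps_le1 eps_le_d (P_gt0 p) (P_reduced Rpq).
rewrite -(ler_nat R) natrD; apply: ltW.
have := ler_wpM2r (ler0n R #|P p|) eps_le_half; have := ler_wpM2r (ler0n R #|P p|) mu_le_half.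
by have := budget_le p; lra.
Qed.

Lemma cluster_admissible : admissible many_nbrs cluster.
Proof.
move=> x; have : x \in P (cluster x) by rewrite P_fiber inE.
have half_d (Y : {set T}) : d / 2 * #|Y|%:R <= d * #|Y|%:R.
  by rewrite ler_wpM2r ?ler0n //; have := d_gt0; lra.
case: (cluster x) => i [] x_in; rewrite /many_nbrs /=; apply: le_trans (half_d _) _.
- exact: (P_super i).2.2.
- exact: (P_super i).2.1.
Qed.

Section Moved.
Variable f : T -> 'I_k * bool.
Hypothesis moved_le : (moved cluster f <= budget)%N.

Let moved_small p : (moved cluster f)%:R <= mu * #|P p|%:R.
Proof. by apply: le_trans (budget_le p); rewrite ler_nat. Qed.

Lemma near_fiber p : near_set mu (moved cluster f) (P p) (fiber f p).
Proof.
have [PD DP] := card_fiber_setD cluster f p; rewrite -P_fiber in PD DP.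
by split; rewrite ?moved_small.
Qed.

Lemma many_nbrs_fiber x q : many_nbrs x q ->
  d' * #|fiber f (partner q)|%:R <= (deg G x (fiber f (partner q)))%:R.
Proof.
rewrite /many_nbrs; set r := partner q; set M := moved cluster f => many.
have [PD DP] := card_fiber_setD cluster f r; rewrite -P_fiber -/M in PD DP.
have deg_le : (deg G x (P r))%:R <= (deg G x (fiber f r))%:R + M%:R :> R.
  by rewrite -natrD ler_nat (leq_trans (deg_setD _ _ _ (fiber f r))) ?leq_add2l.
have card_le : #|fiber f r|%:R <= #|P r|%:R + M%:R :> R.
  by rewrite -natrD ler_nat (leq_trans (leq_card_setD _ (P r))) ?leq_add2l.
(* d' |fiber f r| <= d/8 |P r| + M <= d/2 |P r| - M <= deg x (fiber f r), as M <= d/40 |P r| *)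
have d'_le1 : d' <= 1 by have := d'_le; have := d_le1; have := d_gt0; lra.
have := ler_wpM2l (ltW d'_gt0) card_le; have := ler_wpM2r (ler0n R #|P r|) d'_le.
have := ler_wpM2r (ler0n R M) d'_le1; have := ler_wpM2r (ler0n R #|P r|) mu_le_d.
have := mulr_ge0 (ltW d_gt0) (ler0n R #|P r|); have := moved_small r.
by rewrite -/M mulrDr mul1r; lra.
Qed.
End Moved.

Theorem rebalanced_partition : exists P' : 'I_k * bool -> {set T},
  is_partition P' /\
  (forall i, #|P' (Acl i)|%:Z = #|P (Acl i)|%:Z + a i /\
             #|P' (Bcl i)|%:Z = #|P (Bcl i)|%:Z + b i) /\
  reduced_graph G Rg eps' d' P' /\
  (forall i, super_regular_pair G eps' d' (P' (Acl i)) (P' (Bcl i))).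
Proof.
have walks := transfer_walks Rg_sym Rg_ham Rg_AA Rg_BB.
have budget0 : (moved cluster cluster + total_excess * (2 * k) <= budget)%N.
  by rewrite moved0 add0n /budget leqnn.
have dev0 : deviation target cluster <= (2 * total_excess)%N%:Z.
  by rewrite deviation_cluster lez_nat leq_pmull.
have [f [adm_f moved_f fiber_f]] :=
  redistribute transfer_room walks sum_target cluster_admissible budget0 dev0.
have reg_f : reduced_graph G Rg eps' d' (fiber f).
  move=> p q Rpq; apply: (regular_pair_perturb eps'_gt0 eps'_le1 eps_le
    (ltW mu_gt0) (lexx _) mu_gap (near_fiber moved_f p) (near_fiber moved_f q)).
  exact: P_reduced.
exists (fiber f); split; [|split; [|split]].
- apply: fiber_partition => p; rewrite -card_gt0 -ltz_nat fiber_f; exact: target_gt0.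
- by move=> i; rewrite !fiber_f.
- exact: reg_f.
- move=> i; split; first exact: reg_f (Rg_ham i).1.
  by split=> x; rewrite inE => /eqP fx; have := adm_f x; rewrite fx; apply: many_nbrs_fiber.
Qed.
End Rebalancing.


Theorem lemma6p1 (R : realType) :
  exists d0 : R, 0 < d0 /\ forall d : R, 0 < d -> d <= d0 ->
  exists d'0 : R, 0 < d'0 /\ forall d' : R, 0 < d' -> d' <= d'0 ->
  exists e'0 : R, 0 < e'0 /\ forall eps' : R, 0 < eps' -> eps' <= e'0 ->
  exists e0 : R, 0 < e0 /\ forall eps : R, 0 < eps -> eps <= e0 ->
  exists k0 : nat, forall k : nat, (k0 <= k)%N ->
  exists xi0 : R, 0 < xi0 /\ forall xi : R, 0 < xi -> xi <= xi0 ->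
  forall (T : finType) (G : rel T),
    symmetric G -> irreflexive G ->
  forall (P : 'I_k * bool -> {set T}) (Rg : rel ('I_k * bool)),
    symmetric Rg -> irreflexive Rg ->
    is_partition P ->
    (forall p, #|T|%:R / (3 * k)%:R <= #|P p|%:R :> R) ->
    reduced_graph G Rg eps d P ->
  forall a b : 'I_k -> int,
    contains_ham_cycle Rg ->
    (exists i1 j1 : 'I_k, i1 != j1 /\ Rg (Acl i1) (Acl j1)) ->
    (exists i2 j2 : 'I_k, i2 != j2 /\ Rg (Bcl i2) (Bcl j2)) ->
    (forall i, super_regular_pair G eps d (P (Acl i)) (P (Bcl i))) ->
    (forall i, (`|a i|)%:~R < xi * #|T|%:R /\ (`|b i|)%:~R < xi * #|T|%:R) ->
    \sum_(i < k) a i + \sum_(i < k) b i = 0 ->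
    `|\sum_(i < k) a i| = `|\sum_(i < k) b i| /\
      (`|\sum_(i < k) a i|)%:~R <= xi * #|T|%:R ->
  exists P' : 'I_k * bool -> {set T},
    is_partition P' /\
    (forall i, (#|P' (Acl i)| : int) = (#|P (Acl i)| : int) + a i /\
               (#|P' (Bcl i)| : int) = (#|P (Bcl i)| : int) + b i) /\
    reduced_graph G Rg eps' d' P' /\
    (forall i, super_regular_pair G eps' d' (P' (Acl i)) (P' (Bcl i))).
Proof.
exists 1; split=> // d d_gt0 d_le1.
exists (d / 8); split=> [|d' d'_gt0 d'_le]; first lra.
exists d'; split=> // eps' eps'_gt0 eps'_le.
exists (eps' / 2); split=> [|eps eps_gt0 eps_le]; first lra.
exists 1%N => k k_gt0.
exists (eps' ^+ 2 / 20 / (12 * k%:R ^+ 3)); split=> [|xi xi_gt0 xi_le].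
  by rewrite !divr_gt0 ?mulr_gt0 ?exprn_gt0 ?ltr0n.
move=> T G _ _ P Rg Rg_sym _ P_part P_large P_reduced a b Rg_ham
  [i1 [j1 [_ Rg_AA]]] [i2 [j2 [_ Rg_BB]]] P_super ab_small ab_sum _.
exact: (rebalanced_partition d_gt0 d_le1 d'_gt0 d'_le eps'_gt0 eps'_le eps_gt0 eps_le
  k_gt0 xi_gt0 xi_le Rg_sym P_part P_large P_reduced Rg_ham Rg_AA Rg_BB P_super ab_small
  ab_sum).
Qed.
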